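(* Let $A=\{a,b,c\}$, $\Lambda=\{ab^ic\mid i\geq 1\}$ and $\mathcal{T}_2=\{((ab^ic)^2,\varepsilon)\mid i\ge 1\}$. If $u\in A^\ast$ is $\mathcal{T}_2$-irreducible and invertible in $\Pi_2=\langle a,b,c\mid (ab^ic)^2=1\ (i\geq 1)\rangle$, then $u\in\Lambda^\ast$.
   Context: A word $u$ is $\mathcal{T}_2$-irreducible if it contains no factor of the form $(ab^ic)^2$ with $i\ge1$. A word is invertible in $\Pi_2$ if it represents a unit of $\Pi_2$. $\Lambda^\ast$ is the set of finite concatenations of words from $\Lambda$. *)

From mathcomp Require Import all_boot.
From Stdlib Require Import Relations.Relation_Operators.
Set Implicit Arguments. Unset Strict Implicit. Unset Printing Implicit Defensive.

Inductive letter : Type := La | Lb | Lc.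

Definition word := seq letter.

Definition lam (i : nat) : word := La :: nseq i Lb ++ [:: Lc].

Definition relw (i : nat) : word := lam i ++ lam i.

Inductive T2step : word -> word -> Prop :=
| T2step_intro (p q : word) (i : nat) :
    1 <= i -> T2step (p ++ relw i ++ q) (p ++ q).

(* the congruence on A^* generated by T_2; A^*/~ is the monoid Pi_2 *)
Definition Pi2_eq : word -> word -> Prop := clos_refl_sym_trans word T2step.

Definition invertible_Pi2 (u : word) : Prop :=
  exists v : word, Pi2_eq (u ++ v) [::] /\ Pi2_eq (v ++ u) [::].

Definition T2_irreducible (u : word) : Prop :=
  ~ exists (p q : word) (i : nat), 1 <= i /\ u = p ++ relw i ++ q.

Definition in_Lambda_star (u : word) : Prop :=
  exists ns : seq nat, all (fun i => 0 < i) ns /\ u = flatten (map lam ns).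

(* Orient the defining relations as the deleting rewriting system
   T_2 : (ab^ic)^2 -> empty.  It strictly shortens words, and its only critical
   overlaps (two relators sharing a factor ab^ic) resolve, so by Newman's
   lemma it is confluent: a word equal to 1 in Pi_2 reduces to the empty word.
   Now let u be irreducible with uv = 1.  Along a reduction of uv to the empty
   word, the letters of u get erased from right to left inside relators which
   cannot lie entirely in u; hence the erased suffix of u is always a product
   of prefixes of relators, i.e. of words ab^ic and ab^k.  At the end u itself
   is such a product.  The letter-reversing anti-automorphism a <-> c turns
   vu = 1 into the same statement for the mirror of u, so u is also a product
   of words ab^ic and b^kc.  A word of both shapes lies in Lambda^*. *)

From mathcomp Require Import all_boot.
From mathcomp Require Import zify.
From Stdlib Require Import Relations.Relation_Operators.
Set Implicit Arguments. Unset Strict Implicit.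

Section Newman.

Variables (T : Type) (R : T -> T -> Prop) (measure : T -> nat).

Notation red := (clos_refl_trans_1n T R).

Definition joinable (x y : T) : Prop := exists z, red x z /\ red y z.

Hypothesis R_decreasing : forall x y, R x y -> measure y < measure x.
Hypothesis R_local_confluent : forall w x y, R w x -> R w y -> joinable x y.

Lemma red_trans x y z : red x y -> red y z -> red x z.
Proof.
elim=> // w w' z0 S _ IH H; exact: rt1n_trans S (IH H).
Qed.

Lemma newman w x y : red w x -> red w y -> joinable x y.
Proof.
elim: (measure w).+1 {-2}w (ltnSn (measure w)) x y => {w} [//|n IH] w Hw x y.
case=> [|x1 x0 Sx Rx]; first by move=> Hy; exists y; split; last exact: rt1n_refl.
case=> [|y1 y0 Sy Ry]; first by exists x0; split; [exact: rt1n_refl | exact: rt1n_trans Sx Rx].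
have [z0 [Hx0 Hy0]] := R_local_confluent Sx Sy.
have [z1 [B1 B2]] : joinable x0 z0.
  by apply: (IH x1) Rx Hx0; have := R_decreasing Sx; lia.
have [z2 [B3 B4]] : joinable y0 z1.
  by apply: (IH y1) Ry (red_trans Hy0 B2); have := R_decreasing Sy; lia.
by exists z2; split; [exact: red_trans B1 B4 | exact: B3].
Qed.

Lemma church_rosser x y : clos_refl_sym_trans T R x y -> joinable x y.
Proof.
elim=> {x y} [x y S|x|x y _ [z [A1 A2]]|x y z _ [z1 [A1 A2]] _ [z2 [A3 A4]]].
- by exists y; split; [exact: rt1n_trans S (rt1n_refl _ _ _) | exact: rt1n_refl].
- by exists x; split; exact: rt1n_refl.
- by exists z.
- have [z3 [B1 B2]] := newman A2 A3.
  by exists z3; split; [exact: red_trans A1 B1 | exact: red_trans A4 B2].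
Qed.

Lemma reduces_to_normal_form x n :
  (forall y, ~ R n y) -> clos_refl_sym_trans T R x n -> red x n.
Proof.
move=> Hn /church_rosser [z [Hx Hz]].
by case: Hz Hx => [//|y z0 S _]; case: (Hn y).
Qed.

End Newman.

Notation red := (clos_refl_trans_1n word T2step).

Lemma cat_eq_split (A : Type) (x y z w : seq A) :
  x ++ y = z ++ w -> size x <= size z -> exists m, z = x ++ m /\ y = m ++ w.
Proof.
elim: x z => [|a x IH] z E H; first by exists z.
case: z E H => [|b z] //= [-> E] H.
by have [m [-> ->]] := IH z E H; exists m.
Qed.

Lemma bc_cat_inj i j s t :
  nseq i Lb ++ Lc :: s = nseq j Lb ++ Lc :: t -> i = j /\ s = t.
Proof.
elim: i j => [|i IH] [|j] //=; first by case=> ->.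
by case=> /IH [-> ->].
Qed.

Lemma lam_cat_inj i j s t : lam i ++ s = lam j ++ t -> i = j /\ s = t.
Proof. by rewrite /lam /= -!catA /= => -[] /bc_cat_inj. Qed.

Lemma no_a_in_bc m s i t :
  m ++ La :: s = nseq i Lb ++ Lc :: t -> size m <= i -> False.
Proof.
elim: m i => [|x m IH] [|i] //=.
by case=> _ E H; exact: IH E H.
Qed.

(* An occurrence of a word ab^jc starting inside ab^ic starts at its first
   letter: these words have no self-overlap. *)
Lemma lam_occurrence_in_lam m j s i t :
  m ++ lam j ++ s = lam i ++ t -> size m < size (lam i) -> m = [::].
Proof.
case: m => [//|x m]; rewrite /lam /= => -[_ E] H; exfalso.
apply: (@no_a_in_bc m (nseq j Lb ++ Lc :: s) i t).
- by move: E; rewrite -!catA.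
- by move: H; rewrite size_cat size_nseq /=; lia.
Qed.

Lemma T2step_size w w' : T2step w w' -> size w' < size w.
Proof. by case=> p q i _; rewrite !size_cat /= !size_cat /=; lia. Qed.

(* Critical pair analysis: two redexes, the first one starting no later.
   They are disjoint, equal, or overlap in one factor ab^ic (giving
   ab^ic ab^ic ab^ic, whose two reducts coincide). *)
Lemma T2_critical_pairs p1 q1 p2 q2 i j : 1 <= i -> 1 <= j ->
  p1 ++ relw i ++ q1 = p2 ++ relw j ++ q2 -> size p1 <= size p2 ->
  joinable T2step (p1 ++ q1) (p2 ++ q2).
Proof.
move=> Hi Hj E0 H.
have [m [Ep2 E]] := cat_eq_split E0 H.
have [Hdisjoint | Hoverlap] := leqP (size (relw i)) (size m).
  have [m' [Em Eq1]] := cat_eq_split E Hdisjoint.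
  exists (p1 ++ m' ++ q2); split; apply: rt1n_trans (rt1n_refl _ _ _).
  - by rewrite Eq1; have := T2step_intro (p1 ++ m') q2 Hj; rewrite -!catA.
  - by rewrite Ep2 Em; have := T2step_intro p1 (m' ++ q2) Hi; rewrite -!catA.
move: E; rewrite /relw -!catA => E.
have [Hfirst | Hsecond] := ltnP (size m) (size (lam i)).
  have Em := lam_occurrence_in_lam (esym E) Hfirst; subst m.
  move: E => /lam_cat_inj [-> /lam_cat_inj [_ ->]].
  by exists (p1 ++ q2); rewrite Ep2 cats0; split; exact: rt1n_refl.
have [m' [Em E']] := cat_eq_split E Hsecond.
have Hm' : size m' < size (lam i).
  by move: Hoverlap; rewrite /relw Em !size_cat; lia.
have Em' := lam_occurrence_in_lam (esym E') Hm'; subst m'.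
move: E' => /lam_cat_inj [<- ->].
by exists (p1 ++ lam i ++ q2); rewrite Ep2 Em cats0 -catA; split; exact: rt1n_refl.
Qed.

Lemma T2_local_confluent w x y : T2step w x -> T2step w y -> joinable T2step x y.
Proof.
case=> p1 q1 i Hi; move Ew: (p1 ++ relw i ++ q1) => w0 Hy.
case: Hy Ew => p2 q2 j Hj Ew.
have [H | H] := leqP (size p1) (size p2); first exact: T2_critical_pairs Ew H.
by have [z [A1 A2]] := T2_critical_pairs Hj Hi (esym Ew) (ltnW H); exists z.
Qed.

Lemma Pi2_eq_nil_red w : Pi2_eq w [::] -> red w [::].
Proof.
apply: reduces_to_normal_form.
- exact: T2step_size.
- exact: T2_local_confluent.
- by move=> y /T2step_size.
Qed.

(* Products of prefixes of relators: the prefixes of (ab^ic)^2 are products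
   of the words ab^ic (i >= 1) and ab^k. *)
Inductive rel_prefix_prod : word -> Prop :=
| pp_nil : rel_prefix_prod [::]
| pp_lam i w : 0 < i -> rel_prefix_prod w -> rel_prefix_prod (lam i ++ w)
| pp_ab k w : rel_prefix_prod w -> rel_prefix_prod (La :: nseq k Lb ++ w).

Inductive rel_suffix_prod : word -> Prop :=
| sp_nil : rel_suffix_prod [::]
| sp_lam i w : 0 < i -> rel_suffix_prod w -> rel_suffix_prod (lam i ++ w)
| sp_bc k w : rel_suffix_prod w -> rel_suffix_prod (nseq k Lb ++ Lc :: w).

Lemma rel_prefix_prod_cat x y :
  rel_prefix_prod x -> rel_prefix_prod y -> rel_prefix_prod (x ++ y).
Proof.
elim=> [//|i w Hi _ IH|k w _ IH] Hy; rewrite /= -catA.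
- exact: pp_lam Hi (IH Hy).
- exact: pp_ab (IH Hy).
Qed.

Lemma rel_suffix_prod_cat x y :
  rel_suffix_prod x -> rel_suffix_prod y -> rel_suffix_prod (x ++ y).
Proof.
elim=> [//|i w Hi _ IH|k w _ IH] Hy; rewrite -catA.
- exact: sp_lam Hi (IH Hy).
- exact: sp_bc (IH Hy).
Qed.

Lemma rel_prefix_prod_lam i : 0 < i -> rel_prefix_prod (lam i).
Proof. by move=> Hi; rewrite -[lam i]cats0; exact: pp_lam Hi pp_nil. Qed.

Lemma rel_prefix_prod_take_lam i n : 0 < i -> rel_prefix_prod (take n (lam i)).
Proof.
move=> Hi; case: n => [|n]; first exact: pp_nil.
have pp_ab1 k : rel_prefix_prod (La :: nseq k Lb).
  by rewrite -[La :: _]cats0; exact: pp_ab pp_nil.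
rewrite /lam /= take_cat size_nseq; case: ltnP => H.
- by rewrite take_nseq //; exact: ltnW.
- case: (n - i) => [|k]; first by rewrite take0 cats0.
  exact: rel_prefix_prod_lam.
Qed.

Lemma rel_prefix_prod_take_relw i n : 0 < i -> rel_prefix_prod (take n (relw i)).
Proof.
move=> Hi; rewrite /relw take_cat; case: ifP => _.
- exact: rel_prefix_prod_take_lam.
- apply: rel_prefix_prod_cat; first exact: rel_prefix_prod_lam.
  exact: rel_prefix_prod_take_lam.
Qed.

(* Reducing w = r t to the empty word, where u = r y is
   irreducible and the part y of u already erased is a product of relator
   prefixes, erases u into a product of relator prefixes: a redex meeting r
   cannot cover a whole relator inside u, so it erases a relator prefix of r. *)
Lemma erased_part_rel_prefix_prod u : T2_irreducible u ->
  forall w, red w [::] -> forall r y t,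
  u = r ++ y -> rel_prefix_prod y -> w = r ++ t -> rel_prefix_prod u.
Proof.
move=> Hirr w; move Ez: [::] => z Hred; elim: Hred Ez => {w z}.
  by move=> w <- r y t -> Hy /esym/nilP; rewrite cat_nilp => /andP[/nilP -> _].
move=> w w' z [p q i Hi] _ IH Ez r y t Eu Hy Ew.
have [Hlate | Hearly] := leqP (size r) (size p).
  have [m [Ep _]] := cat_eq_split (esym Ew) Hlate.
  by apply: (IH Ez r y (m ++ q)) Eu Hy _; rewrite Ep -catA.
have [m [Er Em]] := cat_eq_split Ew (ltnW Hearly).
have [Hpref | Hcover] := leqP (size m) (size (relw i)).
  have [m' [Erel _]] := cat_eq_split (esym Em) Hpref.
  have Hm : rel_prefix_prod m.
    have -> : m = take (size m) (relw i) by rewrite Erel take_size_cat.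
    exact: rel_prefix_prod_take_relw.
  apply: (IH Ez p (m ++ y) q) => //.
  - by rewrite Eu Er catA.
  - exact: rel_prefix_prod_cat.
have [m' [Em' _]] := cat_eq_split Em (ltnW Hcover).
case: Hirr; exists p, (m' ++ y), i; split => //.
by rewrite Eu Er Em' -!catA.
Qed.

Lemma left_divisor_of_one_prefix_prod u v :
  T2_irreducible u -> Pi2_eq (u ++ v) [::] -> rel_prefix_prod u.
Proof.
move=> Hirr /Pi2_eq_nil_red Hred.
by apply: (erased_part_rel_prefix_prod Hirr Hred (y := [::])); rewrite ?cats0 //; exact: pp_nil.
Qed.

Definition mirror_letter (l : letter) : letter :=
  match l with La => Lc | Lb => Lb | Lc => La end.

Definition mirror (w : word) : word := rev (map mirror_letter w).

Lemma mirror_cat x y : mirror (x ++ y) = mirror y ++ mirror x.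
Proof. by rewrite /mirror map_cat rev_cat. Qed.

Lemma mirrorK : involutive mirror.
Proof.
move=> w; rewrite /mirror map_rev revK -map_comp.
by rewrite (@eq_map _ _ _ id) ?map_id //; case.
Qed.

Lemma mirror_lam i : mirror (lam i) = lam i.
Proof.
rewrite /mirror /lam /= map_cat map_nseq /= rev_cons rev_cat rev_nseq /=.
by rewrite -cats1.
Qed.

Lemma mirror_factor p i q : mirror (p ++ relw i ++ q) = mirror q ++ relw i ++ mirror p.
Proof. by rewrite !mirror_cat mirror_lam -catA. Qed.

Lemma Pi2_eq_mirror x y : Pi2_eq x y -> Pi2_eq (mirror x) (mirror y).
Proof.
elim=> {x y} [x y [p q i Hi]|x|x y _ H|x y z _ H1 _ H2].
- by apply: rst_step; rewrite mirror_factor mirror_cat; exact: T2step_intro.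
- exact: rst_refl.
- exact: rst_sym.
- exact: rst_trans H1 H2.
Qed.

Lemma T2_irreducible_mirror u : T2_irreducible u -> T2_irreducible (mirror u).
Proof.
move=> Hirr [p [q [i [Hi E]]]]; apply: Hirr; exists (mirror q), (mirror p), i.
by rewrite -(mirrorK u) E mirror_factor.
Qed.

Lemma rel_suffix_prod_mirror w : rel_prefix_prod w -> rel_suffix_prod (mirror w).
Proof.
elim=> [|i w1 Hi _ IH|k w1 _ IH]; first exact: sp_nil.
- rewrite mirror_cat mirror_lam; apply: rel_suffix_prod_cat IH _.
  by rewrite -[lam i]cats0; exact: sp_lam Hi sp_nil.
- rewrite -cat_cons mirror_cat; apply: rel_suffix_prod_cat IH _.
  have -> : mirror (La :: nseq k Lb) = nseq k Lb ++ [:: Lc].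
    by rewrite /mirror /= map_nseq /= rev_cons rev_nseq cats1.
  exact: sp_bc sp_nil.
Qed.

(* A word b^jc w' never factors as b^k w with w a product of relator
   prefixes, since such a w is empty or begins with a. *)
Lemma bc_not_b_prefix_prod j k w' w :
  rel_prefix_prod w -> nseq j Lb ++ Lc :: w' <> nseq k Lb ++ w.
Proof.
move=> Hw; elim: k j => [|k IH] [|j] //=.
- by case: Hw.
- by case: Hw.
- by case=> /IH.
Qed.

Lemma prefix_suffix_prod_Lambda_star u :
  rel_prefix_prod u -> rel_suffix_prod u -> in_Lambda_star u.
Proof.
elim=> [|i w Hi Hw IH|k w Hw _]; first by exists [::].
- move Eu: (lam i ++ w) => u' Hu'; case: Hu' Eu => [|j w' Hj Hw'|k w'] // Eu.
    move: Eu => /lam_cat_inj [Eij Ew]; subst j w'.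
    have [ns [Hns ->]] := IH Hw'.
    by exists (i :: ns); rewrite /= Hi Hns.
  by case: k Eu.
- move Eu: (La :: nseq k Lb ++ w) => u' Hu'; case: Hu' Eu => [|j w' _ _|[]] // Eu.
  by move: Eu; rewrite /lam /= -catA /= => -[] /esym /(bc_not_b_prefix_prod Hw).
Qed.

Theorem mainTheorem7 (u : word) :
  T2_irreducible u -> invertible_Pi2 u -> in_Lambda_star u.
Proof.
move=> Hirr [v [Huv Hvu]].
apply: prefix_suffix_prod_Lambda_star.
- exact: left_divisor_of_one_prefix_prod Hirr Huv.
- (* by symmetry, the mirror of u is an irreducible left divisor of 1 *)
  have Hmirror : Pi2_eq (mirror u ++ mirror v) [::].
    by rewrite -mirror_cat; exact: Pi2_eq_mirror Hvu.
  rewrite -(mirrorK u); apply: rel_suffix_prod_mirror.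
  exact: left_divisor_of_one_prefix_prod (T2_irreducible_mirror Hirr) Hmirror.
Qed.
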